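(* Let $u,c,d,v,w$ be points on the unit circle $\partial\mathbb{B}^2$, occurring in this order along the circle. Let $a=\mathrm{LIS}[u,v,c,w]$ and $b=\mathrm{LIS}[u,v,d,w]$. Then: (1) $|u,a,b,v|=|u,c,d,v|$. (2) The function $F(z)=\mathrm{LIS}[u,v,z,w]$ maps the arc of the unit circle with endpoints $u$ and $v$ that contains $c,d$ onto the segment $[u,v]$, and it is the restriction of the Möbius transformation \[ F(z)=\frac{(uv-uw-vw)z+uvw}{-wz+uv}. \] In particular $F(u)=u$, $F(v)=v$, $a=F(c)$ and $b=F(d)$. (3) If the lines $L[u,v]$ and $L[c,d]$ are parallel, then $uv=cd$ and \[ a=\frac{(u+v-d)w-cd}{w-d},\qquad b=\frac{(u+v-c)w-cd}{w-c}. \]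
   Context: Points of $\mathbb{R}^2$ are identified with complex numbers. $L[x,y]$ is the line through $x\ne y$; $\mathrm{LIS}[x,y,z,t]$ denotes the intersection point of the lines $L[x,y]$ and $L[z,t]$ (when it is a single point). For points $x,y,z,t$, $|x,y,z,t|=\frac{|x-z||y-t|}{|x-y||z-t|}$. *)

From Stdlib Require Import Reals List Sorting.
From Coquelicot Require Import Coquelicot.
Import ListNotations.
Open Scope C_scope.

Definition cexp (t : R) : C := (cos t, sin t).

Definition on_circle (z : C) : Prop := Cmod z = 1%R.

Definition ccw_order (l : list C) : Prop :=
  exists (th : R) (ts : list R),
    l = List.map (fun t : R => cexp (th + t)%R) ts /\
    StronglySorted Rlt ts /\
    List.Forall (fun t : R => (0 <= t < 2 * PI)%R) ts.

Definition in_order (l : list C) : Prop := ccw_order l \/ ccw_order (rev l).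

Definition on_line (x y p : C) : Prop := exists t : R, p = x + RtoC t * (y - x).

Definition on_segment (x y p : C) : Prop :=
  exists t : R, (0 <= t <= 1)%R /\ p = x + RtoC t * (y - x).

Definition is_LIS (x y z t p : C) : Prop :=
  x <> y /\ z <> t /\ on_line x y p /\ on_line z t p /\
  (forall q, on_line x y q -> on_line z t q -> q = p).

Definition cross_ratio (x y z t : C) : R :=
  (Cmod (x - z) * Cmod (y - t) / (Cmod (x - y) * Cmod (z - t)))%R.

Definition parallel (x y z t : C) : Prop := exists k : R, y - x = RtoC k * (t - z).

Definition arc (u v w z : C) : Prop :=
  on_circle z /\ (z = u \/ z = v \/ in_order [u; z; v; w]).

Definition Mob (u v w z : C) : C :=
  ((u * v - u * w - v * w) * z + u * v * w) / (- w * z + u * v).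

From Stdlib Require Import Reals List Lra Sorting.
From Coquelicot Require Import Coquelicot.
Import ListNotations.
Open Scope C_scope.

(* On the unit circle conj z = 1/z, so the line through two points p, q of the circle is
   {x | x + p q conj(x) = p + q}. Solving two such equations shows that L[u,v] and L[z,w] meet
   exactly at Mob u v w z as soon as u v <> z w, i.e. as soon as the chords are not parallel.
   Part (1) is then the invariance of cross ratios under Moebius maps, and part (3) is the
   substitution u v = c d. The cyclic order enters only through the sign of orient u v z: a point
   z of the arc and the point w lie on opposite sides of L[u,v]. Hence Mob u v w z, a point of
   L[z,w], lies on the segment [z,w], so in the closed disc, so on [u,v]; conversely every point
   of [u,v] is reached, by the intermediate value theorem along the arc. *)

Lemma Cmult_reg_l (a b c : C) : a <> 0 -> a * b = a * c -> b = c.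
Proof.
  intros Ha E. replace b with (/ a * (a * b)) by (field; auto).
  rewrite E. field. auto.
Qed.

Lemma Cconj_RtoC (t : R) : Cconj (RtoC t) = RtoC t.
Proof. unfold Cconj, RtoC; simpl. rewrite Ropp_0. reflexivity. Qed.

Lemma Im_eq0_RtoC z : Im z = 0%R -> z = RtoC (Re z).
Proof. destruct z as [x y]; simpl; intros ->; reflexivity. Qed.

Lemma Cmod_neq0 (z : C) : z <> 0 -> Cmod z <> 0%R.
Proof. intros Hz E. apply Hz, Cmod_eq_0, E. Qed.

Definition orient (x y p : C) : R := Im ((p - x) * Cconj (y - x)).

Lemma orient_degen x p : orient x x p = 0%R.
Proof. destruct x, p; unfold orient; simpl; ring. Qed.

Lemma orient_at_l x y : orient x y x = 0%R.
Proof. destruct x, y; unfold orient; simpl; ring. Qed.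

Lemma orient_at_r x y : orient x y y = 0%R.
Proof. destruct x, y; unfold orient; simpl; ring. Qed.

Lemma orient_cycle x y p : orient x y p = orient y p x.
Proof. destruct x, y, p; unfold orient; simpl; ring. Qed.

Lemma orient_swap x y p : orient x p y = (- orient x y p)%R.
Proof. destruct x, y, p; unfold orient; simpl; ring. Qed.

Lemma orient_affine x y p q (s : R) :
  orient x y (p + s * (q - p)) = ((1 - s) * orient x y p + s * orient x y q)%R.
Proof. destruct x, y, p, q; unfold orient; simpl; ring. Qed.

Lemma on_line_iff_orient x y p : x <> y -> on_line x y p <-> orient x y p = 0%R.
Proof.
  intros Hxy; split.
  - intros [t ->]. destruct x, y; unfold orient; simpl; ring.
  - unfold orient; intros H0.
    assert (Hd : y - x <> 0) by (apply Cminus_eq_contra; auto).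
    assert (Hd' : Cconj (y - x) <> 0).
    { intro E. apply Hd, Cmod_eq_0. rewrite <- Cmod_conj, E. apply Cmod_0. }
    exists (Re ((p - x) * Cconj (y - x)) / Cmod (y - x) ^ 2)%R.
    rewrite RtoC_div, <- (Im_eq0_RtoC _ H0), Cmod2_conj.
    + field. auto.
    + apply pow_nonzero. intro E. apply Hd, Cmod_eq_0, E.
Qed.

(** * Chords of the unit circle *)

Lemma unit_neq0 p : on_circle p -> p <> 0.
Proof. unfold on_circle; intros H E; rewrite E, Cmod_0 in H; lra. Qed.

Lemma Cconj_unit p : on_circle p -> Cconj p = / p.
Proof.
  intros H. assert (Hp := unit_neq0 p H).
  assert (E := Cmod2_conj p). rewrite H, pow1 in E.
  replace (Cconj p) with (/ p * (p * Cconj p)) by (field; auto).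
  rewrite <- E. field. auto.
Qed.

Lemma orient_chord p q x : on_circle p -> on_circle q ->
  RtoC (orient p q x) = (p - q) / (2 * Ci * p * q) * (x + p * q * Cconj x - (p + q)).
Proof.
  intros Hp Hq. unfold orient.
  rewrite im_alt, Cmult_conj, Cconj_conj, !Cminus_conj, !Cconj_unit by auto.
  field. repeat split; auto using unit_neq0, Ci_nz.
Qed.

Lemma on_chord_iff p q x : on_circle p -> on_circle q -> p <> q ->
  on_line p q x <-> x + p * q * Cconj x = p + q.
Proof.
  intros Hp Hq Hpq. rewrite on_line_iff_orient by auto.
  assert (Hp0 := unit_neq0 p Hp). assert (Hq0 := unit_neq0 q Hq).
  assert (Hpq' : p - q <> 0) by (apply Cminus_eq_contra; auto).
  assert (Hk : (p - q) / (2 * Ci * p * q) <> 0).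
  { intro E. apply Hpq'. replace (p - q) with ((p - q) / (2 * Ci * p * q) * (2 * Ci * p * q))
      by (field; repeat split; auto using Ci_nz).
    rewrite E. ring. }
  split; intro H.
  - apply (f_equal RtoC) in H. rewrite orient_chord in H by auto.
    apply Ceq_minus, (Cmult_reg_l _ _ _ Hk). rewrite H. ring.
  - apply RtoC_inj. rewrite orient_chord, H by auto. ring.
Qed.

Lemma orient_eq_of_parallel_chords u v z w :
  on_circle u -> on_circle v -> on_circle z -> on_circle w -> u * v = z * w ->
  orient u v z = orient u v w.
Proof.
  intros Hu Hv Hz Hw E. apply RtoC_inj. rewrite !orient_chord, !Cconj_unit by auto.
  rewrite E. field. repeat split; auto using unit_neq0, Ci_nz.
Qed.

Lemma parallel_chords_mul (u v c d : C) :
  on_circle u -> on_circle v -> on_circle c -> on_circle d -> u <> v ->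
  parallel u v c d -> u * v = c * d.
Proof.
  intros Hu Hv Hc Hd Huv [k Hk].
  assert (Hk' := f_equal Cconj Hk).
  rewrite Cmult_conj, Cconj_RtoC, !Cminus_conj, !Cconj_unit in Hk' by auto.
  assert (Hvu : v - u <> 0) by (apply Cminus_eq_contra; auto).
  assert (Hu0 := unit_neq0 u Hu). assert (Hv0 := unit_neq0 v Hv).
  assert (Hc0 := unit_neq0 c Hc). assert (Hd0 := unit_neq0 d Hd).
  apply (Cmult_reg_l (v - u)); auto.
  symmetry. transitivity (- (u * v * (c * d)) * (/ v - / u)); [field; auto|].
  rewrite Hk'. transitivity (u * v * (RtoC k * (d - c))); [field; auto|].
  rewrite <- Hk. ring.
Qed.

Lemma Cmod_chord_point u v (t : R) : on_circle u -> on_circle v ->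
  (Cmod (u + t * (v - u)) ^ 2 = 1 + t * (t - 1) * Cmod (v - u) ^ 2)%R.
Proof.
  intros Hu Hv. apply RtoC_inj.
  rewrite RtoC_plus, !RtoC_mult, RtoC_minus, !Cmod2_conj, !Cplus_conj, !Cmult_conj,
    !Cminus_conj, Cconj_RtoC, !Cconj_unit by auto.
  field. split; auto using unit_neq0.
Qed.

Lemma Cmod_convex_le1 z w (s : R) : (Cmod z <= 1)%R -> (Cmod w <= 1)%R -> (0 <= s <= 1)%R ->
  (Cmod (z + s * (w - z)) <= 1)%R.
Proof.
  intros Hz Hw Hs. replace (z + s * (w - z)) with (RtoC (1 - s) * z + RtoC s * w)
    by (rewrite RtoC_minus; ring).
  eapply Rle_trans; [apply Cmod_triangle|].
  rewrite !Cmod_mult, !Cmod_R, !Rabs_pos_eq by lra. nra.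
Qed.

Lemma on_segment_of_Cmod_le1 u v p : on_circle u -> on_circle v -> u <> v ->
  on_line u v p -> (Cmod p <= 1)%R -> on_segment u v p.
Proof.
  intros Hu Hv Huv [t ->] Hp. exists t. split; auto.
  assert (Hd : (0 < Cmod (v - u))%R) by (apply Cmod_gt_0, Cminus_eq_contra; auto).
  assert (Hsq := Cmod_chord_point u v t Hu Hv).
  assert (Hp2 : (Cmod (u + t * (v - u)) ^ 2 <= 1)%R).
  { pose proof (Cmod_ge_0 (u + t * (v - u))). nra. }
  assert (t * (t - 1) <= 0)%R.
  { assert (0 < Cmod (v - u) ^ 2)%R by (apply pow_lt; auto). nra. }
  nra.
Qed.

(** * The Moebius map [Mob] *)

Lemma Cconj_Mob u v w z :
  on_circle u -> on_circle v -> on_circle w -> on_circle z -> u * v <> z * w ->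
  Cconj (Mob u v w z) = (u + v - (z + w)) / (u * v - z * w).
Proof.
  intros Hu Hv Hw Hz H.
  assert (Hu0 := unit_neq0 u Hu). assert (Hv0 := unit_neq0 v Hv).
  assert (Hw0 := unit_neq0 w Hw). assert (Hz0 := unit_neq0 z Hz).
  assert (Hd : u * v - z * w <> 0) by (apply Cminus_eq_contra; auto).
  assert (Hd' : - w * z + u * v <> 0) by (intro E; apply Hd; rewrite <- E; ring).
  unfold Mob. rewrite Cdiv_conj by exact Hd'.
  rewrite !Cplus_conj, !Cmult_conj, !Cminus_conj, !Cmult_conj, Copp_conj, !Cconj_unit by auto.
  field. repeat split; auto.
  match goal with |- ?e <> _ => replace e with (- (u * v - z * w)) by ring end.
  intro E. apply Hd. replace (u * v - z * w) with (- - (u * v - z * w)) by ring.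
  rewrite E. ring.
Qed.

Lemma is_LIS_Mob u v z w :
  on_circle u -> on_circle v -> on_circle z -> on_circle w ->
  u <> v -> z <> w -> u * v <> z * w -> is_LIS u v z w (Mob u v w z).
Proof.
  intros Hu Hv Hz Hw Huv Hzw H.
  assert (Hd : u * v - z * w <> 0) by (apply Cminus_eq_contra; auto).
  assert (Hm := Cconj_Mob u v w z Hu Hv Hw Hz H).
  repeat split; auto.
  - apply on_chord_iff; auto. rewrite Hm. unfold Mob. field. auto.
  - apply on_chord_iff; auto. rewrite Hm. unfold Mob. field. auto.
  - intros q Lu Lz. rewrite on_chord_iff in Lu, Lz by auto.
    assert (Cq : Cconj q = Cconj (Mob u v w z)).
    { rewrite Hm. apply (Cmult_reg_l (u * v - z * w)); auto.
      rewrite <- Lu at 1. rewrite <- Lz at 1. field. auto. }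
    rewrite <- (Cconj_conj q), Cq, Cconj_conj. reflexivity.
Qed.

Lemma is_LIS_unique (x y z t p q : C) : is_LIS x y z t p -> is_LIS x y z t q -> p = q.
Proof. intros (_ & _ & Lp & Lp' & _) (_ & _ & _ & _ & Hq). apply Hq; auto. Qed.

Lemma Mob_fix_l (u v w : C) : u <> 0 -> v <> w -> Mob u v w u = u.
Proof.
  intros Hu Hvw. unfold Mob. field.
  intro E. apply (Cmult_neq_0 u (v - w)); auto using Cminus_eq_contra.
  rewrite <- E. ring.
Qed.

Lemma Mob_fix_r (u v w : C) : v <> 0 -> u <> w -> Mob u v w v = v.
Proof.
  intros Hv Huw. unfold Mob. field.
  intro E. apply (Cmult_neq_0 v (u - w)); auto using Cminus_eq_contra.
  rewrite <- E. ring.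
Qed.

Lemma Mob_of_parallel (u v w c d : C) : u * v = c * d -> c <> 0 -> d <> w ->
  Mob u v w c = ((u + v - d) * w - c * d) / (w - d).
Proof.
  intros E Hc Hdw. unfold Mob. rewrite E. field. split.
  - apply Cminus_eq_contra; auto.
  - intro E'. apply (Cmult_neq_0 c (d - w)); auto using Cminus_eq_contra.
    rewrite <- E'. ring.
Qed.

Definition mobius (a b c d z : C) : C := (a * z + b) / (c * z + d).

Lemma mobius_sub (a b c d x y : C) : c * x + d <> 0 -> c * y + d <> 0 ->
  mobius a b c d x - mobius a b c d y = (a * d - b * c) * (x - y) / ((c * x + d) * (c * y + d)).
Proof. intros Hx Hy. unfold mobius. field. auto. Qed.

Lemma cross_ratio_mobius (a b c d x y z t : C) :
  a * d - b * c <> 0 ->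
  c * x + d <> 0 -> c * y + d <> 0 -> c * z + d <> 0 -> c * t + d <> 0 ->
  x <> y -> z <> t ->
  cross_ratio (mobius a b c d x) (mobius a b c d y) (mobius a b c d z) (mobius a b c d t) =
  cross_ratio x y z t.
Proof.
  intros Hk Hx Hy Hz Ht Hxy Hzt. unfold cross_ratio.
  rewrite !mobius_sub, !Cmod_div, !Cmod_mult by auto using Cmult_neq_0.
  field. repeat split; apply Cmod_neq0; auto using Cminus_eq_contra.
Qed.

(** * Angles and the cyclic order *)

Lemma cexp_on_circle t : on_circle (cexp t).
Proof.
  unfold on_circle, Cmod, cexp; simpl.
  rewrite !Rmult_1_r, Rplus_comm. fold (Rsqr (sin t)) (Rsqr (cos t)).
  rewrite sin2_cos2. apply sqrt_1.
Qed.

Lemma cexp_neq0 t : cexp t <> 0.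
Proof. apply unit_neq0, cexp_on_circle. Qed.

Lemma cexp_double t : cexp t = cexp (t / 2) * cexp (t / 2).
Proof.
  unfold cexp, Cmult; simpl.
  replace t with (t / 2 + t / 2)%R at 1 2 by field.
  rewrite cos_plus, sin_plus. f_equal; ring.
Qed.

Lemma Ci_double_sq : 2 * Ci * (2 * Ci) = - 4.
Proof. unfold Ci, Cmult, Copp, RtoC; simpl. apply injective_projections; simpl; ring. Qed.

Lemma sin_half_sub a b :
  2 * Ci * RtoC (sin ((a - b) / 2)) = cexp (a / 2) / cexp (b / 2) - cexp (b / 2) / cexp (a / 2).
Proof.
  replace (sin ((a - b) / 2)) with (Im (cexp (a / 2) * Cconj (cexp (b / 2)))).
  - rewrite <- im_alt', Cmult_conj, Cconj_conj, !Cconj_unit by apply cexp_on_circle.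
    field. auto using cexp_neq0.
  - unfold cexp; simpl. replace ((a - b) / 2)%R with (a / 2 - b / 2)%R by field.
    rewrite sin_minus. ring.
Qed.

Lemma orient_cexp al be sg : orient (cexp al) (cexp be) (cexp sg) =
  (- 4 * sin ((sg - al) / 2) * sin ((be - sg) / 2) * sin ((be - al) / 2))%R.
Proof.
  (* Multiplying by (2 i)^3 leaves an identity free of i, since [field] cannot use i^2 = -1. *)
  set (i2 := 2 * Ci).
  assert (Hi2 : i2 <> 0) by (apply Cmult_neq_0; auto using Ci_nz; intro E; injection E; lra).
  apply RtoC_inj, (Cmult_reg_l (i2 * i2 * i2)); auto using Cmult_neq_0.
  transitivity (i2 * i2 * (i2 * RtoC (orient (cexp al) (cexp be) (cexp sg)))); [ring|].
  unfold i2 at 1 2. rewrite Ci_double_sq. unfold orient, i2. rewrite <- im_alt'.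
  transitivity (- 4 * (2 * Ci * RtoC (sin ((sg - al) / 2))) * (2 * Ci * RtoC (sin ((be - sg) / 2)))
                * (2 * Ci * RtoC (sin ((be - al) / 2))));
    [| rewrite !RtoC_mult; ring].
  rewrite !sin_half_sub, Cmult_conj, Cconj_conj, !Cminus_conj, !Cconj_unit by apply cexp_on_circle.
  rewrite (cexp_double al), (cexp_double be), (cexp_double sg).
  field. auto using cexp_neq0.
Qed.

Lemma sin_half_pos x : (0 < x < 2 * PI)%R -> (0 < sin (x / 2))%R.
Proof. intros; apply sin_gt_0; lra. Qed.

Lemma sin_half_neg x : (- (2 * PI) < x < 0)%R -> (sin (x / 2) < 0)%R.
Proof.
  intros. replace (x / 2)%R with (- (- x / 2))%R by field.
  rewrite sin_neg. pose proof (sin_half_pos (- x) ltac:(lra)). lra.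
Qed.

(* The angle form of [in_order [cexp al; cexp sg; cexp be; cexp ga]]. *)
Definition ordered_angles (al sg be ga : R) : Prop :=
  (al < sg < be /\ be < ga < al + 2 * PI)%R \/ (ga < be < sg /\ sg < al < ga + 2 * PI)%R.

Lemma orient_cexp_opposite al sg be ga : ordered_angles al sg be ga ->
  (orient (cexp al) (cexp be) (cexp sg) * orient (cexp al) (cexp be) (cexp ga) < 0)%R.
Proof.
  assert (Hsign : forall s1 s2 s3 s4 k : R, (0 < s1 * s2)%R -> (s3 * s4 < 0)%R -> k <> 0%R ->
            (- 4 * s1 * s2 * k * (- 4 * s3 * s4 * k) < 0)%R).
  { intros s1 s2 s3 s4 k Hp Hq Hk. assert (Hk2 := Rsqr_pos_lt k Hk). unfold Rsqr in Hk2.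
    replace (- 4 * s1 * s2 * k * (- 4 * s3 * s4 * k))%R
      with (16 * (k * k) * ((s1 * s2) * (s3 * s4)))%R by ring.
    assert (0 < 16 * (k * k))%R by lra. assert (s1 * s2 * (s3 * s4) < 0)%R by nra. nra. }
  intros H. rewrite !orient_cexp. apply Hsign; destruct H as [H|H].
  - pose proof (sin_half_pos (sg - al) ltac:(lra)). pose proof (sin_half_pos (be - sg) ltac:(lra)). nra.
  - pose proof (sin_half_neg (sg - al) ltac:(lra)). pose proof (sin_half_neg (be - sg) ltac:(lra)). nra.
  - pose proof (sin_half_pos (ga - al) ltac:(lra)). pose proof (sin_half_neg (be - ga) ltac:(lra)). nra.
  - pose proof (sin_half_neg (ga - al) ltac:(lra)). pose proof (sin_half_pos (be - ga) ltac:(lra)). nra.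
  - pose proof (sin_half_pos (be - al) ltac:(lra)). lra.
  - pose proof (sin_half_neg (be - al) ltac:(lra)). lra.
Qed.

Ltac destruct_sorted :=
  repeat match goal with
  | H : StronglySorted _ (_ :: _) |- _ => apply StronglySorted_inv in H; destruct H
  | H : List.Forall _ (_ :: _) |- _ => apply Forall_cons_iff in H; destruct H
  | H : List.Forall _ [] |- _ => clear H
  | H : StronglySorted _ [] |- _ => clear H
  end.

Lemma in_order4_angles (u z v w : C) : in_order [u; z; v; w] ->
  exists al sg be ga, u = cexp al /\ z = cexp sg /\ v = cexp be /\ w = cexp ga /\
    ordered_angles al sg be ga.
Proof.
  unfold ordered_angles.
  intros [H|H]; destruct H as (th & ts & E & S & F);
    destruct ts as [|t1 [|t2 [|t3 [|t4 [|? ?]]]]]; simpl in E; try discriminate;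
    injection E as -> -> -> ->; destruct_sorted.
  - exists (th + t1)%R, (th + t2)%R, (th + t3)%R, (th + t4)%R. repeat split; left; repeat split; lra.
  - exists (th + t4)%R, (th + t3)%R, (th + t2)%R, (th + t1)%R. repeat split; right; repeat split; lra.
Qed.

Lemma ordered_angles_in_order al sg be ga : ordered_angles al sg be ga ->
  in_order [cexp al; cexp sg; cexp be; cexp ga].
Proof.
  intros [H|H].
  - left. exists al, [0; sg - al; be - al; ga - al]%R.
    split; [simpl; repeat f_equal; ring | split; repeat constructor; lra].
  - right. exists ga, [0; be - ga; sg - ga; al - ga]%R.
    split; [simpl; repeat f_equal; ring | split; repeat constructor; lra].
Qed.

Lemma in_order5_split (u c d v w : C) : in_order [u; c; d; v; w] ->
  in_order [u; c; v; w] /\ in_order [u; d; v; w].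
Proof.
  intros [H|H]; destruct H as (th & ts & E & S & F);
    destruct ts as [|t1 [|t2 [|t3 [|t4 [|t5 [|? ?]]]]]]; simpl in E; try discriminate;
    injection E as -> -> -> -> ->; destruct_sorted;
    split; apply ordered_angles_in_order; unfold ordered_angles; lra.
Qed.

Lemma in_order_orient (u z v w : C) : in_order [u; z; v; w] ->
  (orient u v z * orient u v w < 0)%R.
Proof.
  intros H. destruct (in_order4_angles u z v w H) as (al & sg & be & ga & -> & -> & -> & -> & Ho).
  apply orient_cexp_opposite, Ho.
Qed.

Lemma in_order_off_chord (u z v w : C) : in_order [u; z; v; w] ->
  orient u v w <> 0%R /\ z <> u /\ z <> v.
Proof.
  intros H. assert (S := in_order_orient u z v w H).
  repeat split; intro E.
  - rewrite E in S. lra.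
  - rewrite E, orient_at_l in S. lra.
  - rewrite E, orient_at_r in S. lra.
Qed.

Lemma arc_orient (u v w z : C) : arc u v w z -> (orient u v z * orient u v w <= 0)%R.
Proof.
  intros (_ & [-> | [-> | H]]).
  - rewrite orient_at_l. lra.
  - rewrite orient_at_r. lra.
  - apply Rlt_le, in_order_orient, H.
Qed.

Section Separated.

Variables u v w : C.
Hypotheses (Hu : on_circle u) (Hv : on_circle v) (Hw : on_circle w).
Hypothesis Hsep : orient u v w <> 0%R.

Lemma separated_neq : u <> v /\ u <> w /\ v <> w.
Proof.
  repeat split; intro E; apply Hsep; rewrite <- E;
    auto using orient_degen, orient_at_l, orient_at_r.
Qed.

Lemma separated_not_parallel z : on_circle z -> (orient u v z * orient u v w <= 0)%R ->
  z <> w /\ u * v <> z * w.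
Proof.
  intros Hz Hs. assert (Hpos := Rsqr_pos_lt _ Hsep). unfold Rsqr in Hpos.
  split; intro E.
  - rewrite E in Hs. lra.
  - rewrite (orient_eq_of_parallel_chords u v z w) in Hs by auto. lra.
Qed.

Lemma Mob_is_LIS z : on_circle z -> (orient u v z * orient u v w <= 0)%R ->
  is_LIS u v z w (Mob u v w z).
Proof.
  intros Hz Hs. destruct separated_neq as (Huv & _).
  destruct (separated_not_parallel z Hz Hs). apply is_LIS_Mob; auto.
Qed.

Lemma Mob_on_segment z : on_circle z -> (orient u v z * orient u v w <= 0)%R ->
  on_segment u v (Mob u v w z).
Proof.
  intros Hz Hs. destruct separated_neq as (Huv & _).
  destruct (Mob_is_LIS z Hz Hs) as (_ & _ & Lu & [s Es] & _).
  assert (H0 : orient u v (Mob u v w z) = 0%R) by (apply on_line_iff_orient; auto).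
  (* orient u v is affine and vanishes at Mob z = z + s (w - z), so s = A / (A - B) with A B <= 0. *)
  rewrite Es, orient_affine in H0.
  set (A := orient u v z) in *. set (B := orient u v w) in *.
  assert (HB : (0 < B * B)%R) by (apply Rsqr_pos_lt; auto).
  assert (HAB : (0 < (A - B) * (A - B))%R).
  { apply Rsqr_pos_lt. intro E. replace A with B in Hs by lra. lra. }
  assert (Hs' : (0 <= s <= 1)%R).
  { assert (E1 : (s * (A - B) = A)%R) by lra.
    assert (E2 : (s * ((A - B) * (A - B)) = A * A - A * B)%R)
      by (rewrite <- Rmult_assoc, E1; ring).
    split; nra. }
  apply on_segment_of_Cmod_le1; auto.
  rewrite Es. apply Cmod_convex_le1; auto; unfold on_circle in *; lra.
Qed.

Lemma cross_ratio_Mob c d : on_circle c -> on_circle d ->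
  (orient u v c * orient u v w <= 0)%R -> (orient u v d * orient u v w <= 0)%R ->
  u <> c -> d <> v ->
  cross_ratio u (Mob u v w c) (Mob u v w d) v = cross_ratio u c d v.
Proof.
  intros Hc Hd Sc Sd Huc Hdv. destruct separated_neq as (_ & Huw & Hvw).
  destruct (separated_not_parallel c Hc Sc) as [_ Hc']. destruct (separated_not_parallel d Hd Sd) as [_ Hd'].
  assert (Hu0 := unit_neq0 u Hu). assert (Hv0 := unit_neq0 v Hv).
  (* [Mob u v w] unfolds to this [mobius]; its determinant is u v (u - w) (v - w). *)
  transitivity (cross_ratio (Mob u v w u) (Mob u v w c) (Mob u v w d) (Mob u v w v)).
  { rewrite Mob_fix_l, Mob_fix_r by auto. reflexivity. }
  apply (cross_ratio_mobius (u * v - u * w - v * w) (u * v * w) (- w) (u * v)); auto;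
    intro E.
  - apply (Cmult_neq_0 (u * v) ((u - w) * (v - w))); auto using Cmult_neq_0, Cminus_eq_contra.
    rewrite <- E. ring.
  - apply (Cmult_neq_0 u (v - w)); auto using Cminus_eq_contra. rewrite <- E. ring.
  - apply Hc'. apply Ceq_minus. rewrite <- E. ring.
  - apply Hd'. apply Ceq_minus. rewrite <- E. ring.
  - apply (Cmult_neq_0 v (u - w)); auto using Cminus_eq_contra. rewrite <- E. ring.
Qed.

Lemma Mob_onto_segment al sg be ga p :
  u = cexp al -> v = cexp be -> w = cexp ga -> ordered_angles al sg be ga ->
  on_segment u v p -> exists z, arc u v w z /\ Mob u v w z = p.
Proof.
  intros Eu Ev Ew Ho [t [Ht Ep]].
  (* As z runs along the arc from u to v, orient z w p changes sign. *)
  set (f := fun l : R => orient (cexp (al + l * (be - al))) w p).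
  assert (Cf : continuity f).
  { unfold f, orient, cexp. rewrite Ew. destruct p as [p1 p2]. simpl. reg. }
  assert (F0 : f 0%R = (- t * orient u v w)%R).
  { unfold f. rewrite Rmult_0_l, Rplus_0_r, <- Eu, Ep, orient_affine, orient_at_l,
      orient_swap. ring. }
  assert (F1 : f 1%R = ((1 - t) * orient u v w)%R).
  { unfold f. replace (al + 1 * (be - al))%R with be by ring.
    rewrite <- Ev, Ep, orient_affine, orient_at_l, (orient_cycle u v w). ring. }
  destruct (IVT_cor f 0 1 Cf) as (l & Hl & Fl); [lra | |].
  { rewrite F0, F1.
    replace (- t * orient u v w * ((1 - t) * orient u v w))%R
      with (- (t * (1 - t)) * (orient u v w * orient u v w))%R by ring.
    assert (0 <= t * (1 - t))%R by nra. assert (0 <= orient u v w * orient u v w)%R by nra.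
    nra. }
  set (z := cexp (al + l * (be - al))).
  assert (Az : arc u v w z).
  { split; [apply cexp_on_circle|].
    destruct (Req_dec l 0) as [->|H0].
    { left. unfold z. rewrite Eu. f_equal. ring. }
    destruct (Req_dec l 1) as [->|H1].
    { right; left. unfold z. rewrite Ev. f_equal. ring. }
    right; right. rewrite Eu, Ev, Ew. apply ordered_angles_in_order.
    destruct Ho as [Ho|Ho]; [left|right]; nra. }
  destruct (separated_not_parallel z (cexp_on_circle _) (arc_orient _ _ _ _ Az)) as [Hzw _].
  destruct (Mob_is_LIS z (cexp_on_circle _) (arc_orient _ _ _ _ Az)) as (_ & _ & _ & _ & Huniq).
  exists z. split; auto. symmetry. apply Huniq.
  - exists t. exact Ep.
  - apply on_line_iff_orient; auto.
Qed.

Lemma Mob_image_arc c : in_order [u; c; v; w] ->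
  forall p, on_segment u v p <-> exists z, arc u v w z /\ Mob u v w z = p.
Proof.
  intros Hc4 p. split.
  - intros Hp. destruct (in_order4_angles u c v w Hc4) as (al & sg & be & ga & Eu & _ & Ev & Ew & Ho).
    eapply Mob_onto_segment; eauto.
  - intros (z & Az & <-). apply Mob_on_segment; auto using arc_orient. apply Az.
Qed.

Lemma Mob_parallel c d : on_circle c -> on_circle d ->
  (orient u v c * orient u v w <= 0)%R -> (orient u v d * orient u v w <= 0)%R ->
  parallel u v c d ->
  u * v = c * d /\
  Mob u v w c = ((u + v - d) * w - c * d) / (w - d) /\
  Mob u v w d = ((u + v - c) * w - c * d) / (w - c).
Proof.
  intros Hc Hd Sc Sd Hpar. destruct separated_neq as (Huv & _).
  destruct (separated_not_parallel c Hc Sc) as [Hcw _].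
  destruct (separated_not_parallel d Hd Sd) as [Hdw _].
  assert (E := parallel_chords_mul u v c d Hu Hv Hc Hd Huv Hpar).
  split; [exact E | split].
  - apply Mob_of_parallel; auto using unit_neq0.
  - rewrite (Cmult_comm c d). apply Mob_of_parallel; auto using unit_neq0.
    rewrite E. apply Cmult_comm.
Qed.

End Separated.

Theorem lemma3p12 (u c d v w a b : C) :
  on_circle u -> on_circle c -> on_circle d -> on_circle v -> on_circle w ->
  in_order [u; c; d; v; w] ->
  is_LIS u v c w a -> is_LIS u v d w b ->
  (* (1) *)
  cross_ratio u a b v = cross_ratio u c d v /\
  (* (2) *)
  ((forall z, arc u v w z -> is_LIS u v z w (Mob u v w z)) /\
   (forall p, on_segment u v p <-> exists z, arc u v w z /\ Mob u v w z = p) /\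
   Mob u v w u = u /\ Mob u v w v = v /\ a = Mob u v w c /\ b = Mob u v w d) /\
  (* (3) *)
  (parallel u v c d ->
     u * v = c * d /\
     a = ((u + v - d) * w - c * d) / (w - d) /\
     b = ((u + v - c) * w - c * d) / (w - c)).
Proof.
  intros Hu Hc Hd Hv Hw Hord La Lb.
  destruct (in_order5_split u c d v w Hord) as [Hc4 Hd4].
  destruct (in_order_off_chord u c v w Hc4) as (Hsep & Hcu & _).
  destruct (in_order_off_chord u d v w Hd4) as (_ & _ & Hdv).
  assert (Sc := arc_orient u v w c (conj Hc (or_intror (or_intror Hc4)))).
  assert (Sd := arc_orient u v w d (conj Hd (or_intror (or_intror Hd4)))).
  assert (Ha : a = Mob u v w c) by (eapply is_LIS_unique; eauto using Mob_is_LIS).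
  assert (Hb : b = Mob u v w d) by (eapply is_LIS_unique; eauto using Mob_is_LIS).
  destruct (separated_neq u v w Hsep) as (_ & Huw & Hvw).
  rewrite Ha, Hb. split; [|split].
  - apply cross_ratio_Mob; auto.
  - split; [|split; [apply (Mob_image_arc u v w Hu Hv Hw Hsep c Hc4)|]].
    + intros z Az. apply Mob_is_LIS; auto using arc_orient. apply Az.
    + repeat split; auto using Mob_fix_l, Mob_fix_r, unit_neq0.
  - apply Mob_parallel; auto.
Qed.
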